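(* For any metrized graph $\Gamma$ with $v$ vertices, $$Kf(\Gamma) \leq \frac{v^2}{4}\, y(\Gamma).$$
   Context: A metrized graph $\Gamma$ is a finite connected graph (multiple edges and self-loops allowed) each of whose edges is identified with a closed segment of positive length, with a finite nonempty vertex set $V(\Gamma)$ containing every point of valence $\neq2$; $v=\#V(\Gamma)$, $L_i$ the length of $e_i$, $r$ the effective resistance (edges as resistors of resistance equal to length). $Kf(\Gamma)=\frac12\sum_{p,q\in V(\Gamma)}r(p,q)$. For an edge $e_i$ with end points $p_i,q_i$: if $\Gamma-e_i$ (interior deleted) is connected, $R_i$ is the effective resistance between $p_i,q_i$ in $\Gamma-e_i$, $R_{a_i,p}=\hat j_{p_i}(p,q_i)$, $R_{b_i,p}=\hat j_{q_i}(p,p_i)$ with $\hat j_z(x,y)$ the voltage function of $\Gamma-e_i$ (potential at $x$ when unit current enters at $y$ and exits at $z$, potential $0$ at $z$); if $e_i$ is a bridge, $R_{a_i,p}=0,R_{b_i,p}=R_i$ for $p$ in the component of $\Gamma-e_i$ containing $p_i$ and $R_{a_i,p}=R_i,R_{b_i,p}=0$ otherwise, with every expression in $R_i$ interpreted as its limit as $R_i\to\infty$; for a self-loop $R_i=0$. For a fixed vertex $p$ (independent of choice), $y(\Gamma)=\frac14\sum_{e_i}\frac{L_iR_i^2}{(L_i+R_i)^2}+\frac34\sum_{e_i}\frac{L_i(R_{a_i,p}-R_{b_i,p})^2}{(L_i+R_i)^2}$. *)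

From HB Require Import structures.
From mathcomp Require Import all_boot all_order all_algebra.
From mathcomp Require Import reals.
From Stdlib Require Import ClassicalEpsilon.
Set Implicit Arguments. Unset Strict Implicit. Unset Printing Implicit Defensive.
Import Order.TTheory GRing.Theory Num.Theory.
Local Open Scope ring_scope.

Section MetrizedGraph.
(* A metrized graph given by a model: vertex set V, edge set E, edge e joins
   the end points ep1 e and ep2 e (self-loops / multiple edges allowed),
   and has length L e (> 0, assumed in the theorem). A sub-network is given
   by a predicate S on E selecting the edges that are present. *)
Variables (R : realType) (V E : finType) (ep1 ep2 : E -> V) (L : E -> R).

Definition adj (S : pred E) : rel V :=
  fun u w => [exists e, S e && (((ep1 e == u) && (ep2 e == w)) ||
                                ((ep1 e == w) && (ep2 e == u)))].

Definition connectedb (S : pred E) : bool :=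
  [forall u, [forall w, connect (adj S) u w]].

(* f is the voltage function of the network S (edges as resistors of
   resistance L e) when unit current enters at y and exits at z, with
   potential 0 at z: Kirchhoff's current law at every vertex. *)
Definition is_voltage (S : pred E) (z y : V) (f : V -> R) : Prop :=
  f z = 0 /\
  forall u : V,
    \sum_(e | S e && (ep1 e == u)) (f u - f (ep2 e)) / L e
  + \sum_(e | S e && (ep2 e == u)) (f u - f (ep1 e)) / L e
  = (u == y)%:R - (u == z)%:R.

Definition voltage (S : pred E) (z y : V) : V -> R :=
  epsilon (inhabits (fun _ : V => 0)) (is_voltage S z y).

Definition jhat (S : pred E) (z x y : V) : R := voltage S z y x.

Definition res (S : pred E) (a b : V) : R := jhat S b a a.

Definition allE : pred E := predT.
Definition delE (e : E) : pred E := [pred e' | e' != e].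

Definition is_bridge (e : E) : bool := ~~ connectedb (delE e).

Definition Ri (e : E) : R := res (delE e) (ep1 e) (ep2 e).
Definition Rai (e : E) (p : V) : R := jhat (delE e) (ep1 e) p (ep2 e).
Definition Rbi (e : E) (p : V) : R := jhat (delE e) (ep2 e) p (ep1 e).

(* For a bridge, the terms are their limits as R_i -> oo, namely L_i
   (both for L R^2/(L+R)^2 and for L (R_a - R_b)^2/(L+R)^2, since then
   {R_a, R_b} = {0, R_i}). *)
Definition yterm1 (e : E) : R :=
  if is_bridge e then L e
  else L e * (Ri e) ^+ 2 / (L e + Ri e) ^+ 2.

Definition yterm2 (e : E) (p : V) : R :=
  if is_bridge e then L e
  else L e * (Rai e p - Rbi e p) ^+ 2 / (L e + Ri e) ^+ 2.

Definition ygraph (p : V) : R :=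
  4^-1 * \sum_e yterm1 e + (3 / 4) * \sum_e yterm2 e p.

Definition Kf : R := 2^-1 * \sum_(a : V) \sum_(b : V) res allE a b.

End MetrizedGraph.

(* Fix p, let u_x be the potential of the unit current from x to p, and
   r_x = r(x, p) = u_x(x).  For the Dirichlet pairing
   <f, g> = sum_e (f(p_e) - f(q_e)) (g(p_e) - g(q_e)) / L_e, Green's identity
   gives <u_x, u_y> = u_x(y) and <r, u_x> = r_x, and superposition gives
   r(a, b) = r_a + r_b - 2 u_a(b).  Hence
     0 <= <sum_x (u_x - r/2), sum_x (u_x - r/2)> = (n^2/4) <r, r> - Kf.
   For an edge e from a to b, let h be the potential of the unit current from a
   to b in the whole graph.  Then r_a - r_b = h(a) - 2 h(p), and the two terms
   of y for e are h(a)^2 / L_e and (h(a) - 2 h(p))^2 / L_e: if e is not a bridge,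
   h is L_e / (L_e + R_e) times the potential of the graph with e deleted; if it
   is, h is L_e on the side of a and 0 on the side of b.  The maximum principle
   gives 0 <= h(p) <= h(a), so <r, r> = sum_e (second terms) <= y. *)

From HB Require Import structures.
From mathcomp Require Import all_boot all_order all_algebra.
From mathcomp Require Import reals.
From Stdlib Require Import ClassicalEpsilon.
From mathcomp Require Import ring lra.
Set Implicit Arguments. Unset Strict Implicit. Unset Printing Implicit Defensive.
Import Order.TTheory GRing.Theory Num.Theory.
Local Open Scope ring_scope.

Section FiniteLinearMaps.
Variables (F : fieldType) (V : finType) (T : (V -> F) -> V -> F).
Hypothesis T_ext : forall f g, f =1 g -> T f =1 T g.
Hypothesis T_lin : forall (I : finType) (c : I -> F) (G : I -> V -> F) w,
  T (fun x => \sum_i c i * G i x) w = \sum_i c i * T (G i) w.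
Hypothesis T_inj : forall f, T f =1 (fun _ => 0) -> f =1 (fun _ => 0).

Lemma linear_injective_surjective t : exists f, T f =1 t.
Proof.
pose fv (u : 'rV[F]_#|V|) (x : V) := u 0 (enum_rank x).
pose A : 'M[F]_#|V| :=
  \matrix_(i, j) T (fun x => (x == enum_val i)%:R) (enum_val j).
have fvE u x : fv u x = \sum_i u 0 i * (x == enum_val i)%:R.
  rewrite (bigD1 (enum_rank x)) //= enum_rankK eqxx mulr1 big1 ?addr0 //.
  move=> i /negbTE ne; case: eqP => [xe|]; last by rewrite mulr0.
  by rewrite xe enum_valK eqxx in ne.
have uA u w : (u *m A) 0 (enum_rank w) = T (fv u) w.
  rewrite mxE (T_ext (fvE u)) (T_lin (u 0) (fun i x => (x == enum_val i)%:R)).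
  by apply: eq_bigr => i _; rewrite mxE enum_rankK.
have A_unit : A \in unitmx.
  rewrite -row_free_unit -kermx_eq0; apply/rowV0P => u /sub_kermxP uA0.
  have fv0 : fv u =1 (fun _ => 0).
    by apply: T_inj => w; rewrite -uA uA0 mxE.
  by apply/rowP => i; have := fv0 (enum_val i); rewrite /fv enum_valK mxE.
exists (fv ((\row_j t (enum_val j)) *m invmx A)) => w.
by rewrite -uA mulmxKV // mxE enum_rankK.
Qed.

End FiniteLinearMaps.

Section Network.
Variables (R : realType) (V E : finType) (ep1 ep2 : E -> V) (L : E -> R).
Hypothesis L_pos : forall e, 0 < L e.

Local Notation adjS := (adj ep1 ep2).
Local Notation connected := (connectedb ep1 ep2).
Local Notation volt := (voltage ep1 ep2 L).
Local Notation allE := (@allE E).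

Definition laplacian (S : pred E) (f : V -> R) (u : V) : R :=
    \sum_(e | S e && (ep1 e == u)) (f u - f (ep2 e)) / L e
  + \sum_(e | S e && (ep2 e == u)) (f u - f (ep1 e)) / L e.

Definition edge_diff (f : V -> R) (e : E) : R := f (ep1 e) - f (ep2 e).

Lemma sum_by_endpoint (P : pred E) (h : E -> V) (F : V -> E -> R) :
  \sum_u \sum_(e | P e && (h e == u)) F u e = \sum_(e | P e) F (h e) e.
Proof.
rewrite (exchange_big_dep P) /=; last by move=> u e _ /andP[].
apply: eq_bigr => e Pe.
rewrite (bigD1 (h e)) ?Pe ?eqxx //= big1 ?addr0 //.
by move=> u /andP[/eqP-> ]; rewrite eqxx.
Qed.

Lemma green_identity S (f g : V -> R) :
  \sum_u g u * laplacian S f u =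
  \sum_(e | S e) edge_diff g e * edge_diff f e / L e.
Proof.
under eq_bigr => u _ do rewrite mulrDr !mulr_sumr.
rewrite big_split /= !sum_by_endpoint -big_split /=.
by apply: eq_bigr => e _; rewrite /edge_diff; ring.
Qed.

Lemma laplacian_ext S (f g : V -> R) : f =1 g -> laplacian S f =1 laplacian S g.
Proof.
by move=> fg u; rewrite /laplacian; congr (_ + _); apply: eq_bigr => e _; rewrite !fg.
Qed.

Lemma laplacianZ S (c : R) (f : V -> R) u :
  laplacian S (fun x => c * f x) u = c * laplacian S f u.
Proof.
rewrite /laplacian mulrDr !mulr_sumr.
by congr (_ + _); apply: eq_bigr => e _; ring.
Qed.

Lemma laplacianN S (f : V -> R) u :
  laplacian S (fun x => - f x) u = - laplacian S f u.
Proof.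
by rewrite (laplacian_ext _ (fun x => esym (mulN1r (f x)))) laplacianZ mulN1r.
Qed.

Lemma laplacianB S (f g : V -> R) u :
  laplacian S (fun x => f x - g x) u = laplacian S f u - laplacian S g u.
Proof.
rewrite /laplacian opprD addrACA -!sumrB.
by congr (_ + _); apply: eq_bigr => e _; ring.
Qed.

Lemma laplacian_sum S (I : finType) (F : I -> V -> R) u :
  laplacian S (fun x => \sum_i F i x) u = \sum_i laplacian S (F i) u.
Proof.
rewrite /laplacian big_split /=; congr (_ + _); rewrite exchange_big /=;
  by apply: eq_bigr => e _; rewrite -sumrB mulr_suml.
Qed.

Lemma sum_laplacian S (f : V -> R) : \sum_u laplacian S f u = 0.
Proof.
have := green_identity S f (fun _ => 1); rewrite /edge_diff.
under eq_bigr do rewrite mul1r.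
by move=> ->; apply: big1 => e _; rewrite subrr !mul0r.
Qed.

Lemma sum_mul_dipole (g : V -> R) a b :
  \sum_w g w * ((w == a)%:R - (w == b)%:R) = g a - g b.
Proof.
under eq_bigr do rewrite mulrBr.
rewrite sumrB (bigD1 a) // (bigD1 b (P := xpredT)) //= !eqxx !mulr1.
by rewrite !big1 ?addr0 // => w /negbTE ->; rewrite mulr0.
Qed.

Lemma laplacian_determined_at S (f g : V -> R) z :
  (forall w, w != z -> laplacian S f w = g w) -> \sum_w g w = 0 ->
  laplacian S f z = g z.
Proof.
move=> fg; rewrite (bigD1 z) //= => /eqP; rewrite addr_eq0 => /eqP ->.
have /eqP := sum_laplacian S f; rewrite (bigD1 z) //= addr_eq0 => /eqP ->.
by congr (- _); apply: eq_bigr.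
Qed.

Lemma adj_sym S : symmetric (adjS S).
Proof.
by move=> x y; apply/existsP/existsP => -[e He]; exists e; move: He;
  rewrite [(_ && _) || _]orbC.
Qed.

Lemma connected_ind S (P : V -> V -> Prop) :
  connected S -> (forall x, P x x) -> (forall x y z, P x y -> P y z -> P x z) ->
  (forall x y, adjS S x y -> P x y) -> forall x y, P x y.
Proof.
move=> /forallP cS Prefl Ptr Padj x y.
have /forallP/(_ y)/connectP[q pth ->] := cS x.
elim: q x pth => [|z q IH] x /=; first by move=> _; exact: Prefl.
by case/andP=> xz pth; apply: Ptr (Padj _ _ xz) (IH _ pth).
Qed.

Lemma laplacian_eq0_of_adj S (f : V -> R) :
  (forall x y, adjS S x y -> f x = f y) -> laplacian S f =1 (fun _ => 0).
Proof.
move=> fadj u; have fe e : S e -> f (ep1 e) = f (ep2 e).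
  by move=> Se; apply: fadj; apply/existsP; exists e; rewrite Se !eqxx.
rewrite /laplacian !big1 ?addr0 // => e /andP[Se /eqP <-];
  by rewrite fe // subrr mul0r.
Qed.

Lemma harmonic_constant S (h : V -> R) :
  connected S -> laplacian S h =1 (fun _ => 0) -> forall u w, h u = h w.
Proof.
move=> cS hh.
have energy0 : \sum_(e | S e) edge_diff h e * edge_diff h e / L e = 0.
  by rewrite -green_identity big1 // => u _; rewrite hh mulr0.
have h_edge e : S e -> h (ep1 e) = h (ep2 e).
  move=> Se; have : edge_diff h e * edge_diff h e / L e = 0.
    apply: (psumr_eq0P _ energy0 Se) => i _.
    by apply: divr_ge0; [rewrite -expr2 sqr_ge0 | exact: ltW].
  move/eqP; rewrite !mulf_eq0 invr_eq0 (negbTE (lt0r_neq0 (L_pos e))) orbF orbb.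
  by rewrite subr_eq0 => /eqP.
apply: connected_ind cS _ _ _ => // [x y z -> -> //|x y].
by case/existsP=> e /andP[Se /orP[] /andP[/eqP <- /eqP <-]]; rewrite h_edge.
Qed.

Lemma max_spreads_to_neighbors S (f : V -> R) x :
  (forall w, f w <= f x) -> laplacian S f x <= 0 ->
  forall w, adjS S x w -> f w = f x.
Proof.
move=> fmax lx.
have t_ge0 (h : E -> V) e : 0 <= (f x - f (h e)) / L e.
  by apply: divr_ge0; [rewrite subr_ge0 | exact: ltW].
have s1 : 0 <= \sum_(e | S e && (ep1 e == x)) (f x - f (ep2 e)) / L e.
  by apply: sumr_ge0 => e _; exact: t_ge0.
have s2 : 0 <= \sum_(e | S e && (ep2 e == x)) (f x - f (ep1 e)) / L e.
  by apply: sumr_ge0 => e _; exact: t_ge0.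
have /eqP : laplacian S f x = 0 by apply/eqP; rewrite eq_le lx addr_ge0.
rewrite /laplacian paddr_eq0 // => /andP[/eqP z1 /eqP z2].
have term (h : E -> V) e : (f x - f (h e)) / L e = 0 -> f (h e) = f x.
  move/eqP; rewrite mulf_eq0 invr_eq0 (negbTE (lt0r_neq0 (L_pos e))) orbF.
  by rewrite subr_eq0 => /eqP.
move=> w /existsP[e /andP[Se /orP[] /andP[/eqP ex /eqP ew]]].
- rewrite -ew; apply: (term ep2); apply: (psumr_eq0P _ z1) => [i _|].
    exact: t_ge0.
  by rewrite Se ex eqxx.
- rewrite -ex; apply: (term ep1); apply: (psumr_eq0P _ z2) => [i _|].
    exact: t_ge0.
  by rewrite Se ew eqxx.
Qed.

Lemma max_principle S (f : V -> R) s : connected S ->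
  (forall w, w != s -> laplacian S f w <= 0) -> forall w, f w <= f s.
Proof.
move=> cS sub_f.
have [m _ fm] := @arg_maxP _ _ V s xpredT f isT.
case: (eqVneq (f s) (f m)) => [-> w|ne]; first exact: fm.
suff : f m = f m -> f s = f m by move/(_ erefl)/eqP; rewrite (negbTE ne).
apply: (connected_ind (P := fun x y => f x = f m -> f y = f m)) cS _ _ _ _ _ => //.
  by move=> x y z h1 h2 /h1 /h2.
move=> x y xy fx.
have fmx w : f w <= f x by rewrite fx; exact: fm.
have xs : x != s by apply: contra_neq ne => <-.
by rewrite (max_spreads_to_neighbors fmx (sub_f x xs) xy).
Qed.

(* The Kirchhoff system with the equation at z replaced by the grounding value
   f z; on a connected network it is nonsingular. *)
Definition grounded S z (f : V -> R) (w : V) : R :=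
  if w == z then f z else laplacian S f w.

Lemma grounded_eq0 S z (f : V -> R) :
  connected S -> grounded S z f =1 (fun _ => 0) -> f =1 (fun _ => 0).
Proof.
move=> cS Tf0.
have lap0 w : w != z -> laplacian S f w = 0.
  by move=> wz; have := Tf0 w; rewrite /grounded (negbTE wz).
have harm : laplacian S f =1 (fun _ => 0).
  move=> w; case: (eqVneq w z) => [->|]; last exact: lap0.
  by apply: laplacian_determined_at lap0 _; rewrite big1.
have := Tf0 z; rewrite /grounded eqxx => fz w.
by rewrite (harmonic_constant cS harm w z).
Qed.

Lemma voltage_exists S z y : connected S -> exists f, is_voltage ep1 ep2 L S z y f.
Proof.
move=> cS; pose src w : R := (w == y)%:R - (w == z)%:R.
have [f Tf] : exists f, grounded S z f =1 (fun w => if w == z then 0 else src w).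
  apply: linear_injective_surjective => [f g fg w|I c F w|f]; rewrite /grounded.
  - by rewrite fg (laplacian_ext _ fg).
  - case: (w == z) => //; rewrite laplacian_sum.
    by apply: eq_bigr => i _; exact: laplacianZ.
  - exact: grounded_eq0.
have lap_src w : w != z -> laplacian S f w = src w.
  by move=> wz; have := Tf w; rewrite /grounded (negbTE wz).
exists f; split=> [|w]; first by have := Tf z; rewrite /grounded eqxx.
change (laplacian S f w = src w).
case: (eqVneq w z) => [->|]; last exact: lap_src.
apply: laplacian_determined_at lap_src _.
have := sum_mul_dipole (fun _ => 1) y z.
by under eq_bigr do rewrite mul1r; rewrite subrr.
Qed.

Section Voltage.
Variables (S : pred E) (z y : V).
Hypothesis cS : connected S.

Lemma voltage_spec : is_voltage ep1 ep2 L S z y (volt S z y).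
Proof. by apply: epsilon_spec; exact: voltage_exists. Qed.

Lemma voltage_sink : volt S z y z = 0.
Proof. by case: voltage_spec. Qed.

Lemma laplacian_voltage w : laplacian S (volt S z y) w = (w == y)%:R - (w == z)%:R.
Proof. by case: voltage_spec => _; apply. Qed.

Lemma voltage_of_laplacian (f : V -> R) :
  (forall w, laplacian S f w = (w == y)%:R - (w == z)%:R) ->
  forall w, volt S z y w = f w - f z.
Proof.
move=> lap_f w.
have harm : laplacian S (fun x => volt S z y x - f x) =1 (fun _ => 0).
  by move=> u; rewrite laplacianB laplacian_voltage lap_f subrr.
have := harmonic_constant cS harm w z; rewrite voltage_sink; lra.
Qed.

Lemma voltage_le_source x : volt S z y x <= volt S z y y.
Proof.
apply: max_principle cS _ x => w wy.
by rewrite laplacian_voltage // (negbTE wy) sub0r oppr_le0 ler0n.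
Qed.

Lemma voltage_ge0 x : 0 <= volt S z y x.
Proof.
have min_z w : - volt S z y w <= - volt S z y z.
  apply: (max_principle (f := fun x => - volt S z y x)) cS _ w => u uz.
  by rewrite laplacianN laplacian_voltage // (negbTE uz) subr0 oppr_le0 ler0n.
by have := min_z x; rewrite voltage_sink // oppr0 oppr_le0.
Qed.

End Voltage.

Lemma voltage_swap S a b x : connected S ->
  volt S a b x = volt S b a a - volt S b a x.
Proof.
move=> cS; rewrite (@voltage_of_laplacian S a b cS (fun w => - volt S b a w)).
  by rewrite opprK addrC.
by move=> w; rewrite laplacianN laplacian_voltage // opprB.
Qed.

Lemma sumr_split_at (F : E -> R) (P : pred E) e :
  \sum_(i | P i) F i = (P e)%:R * F e + \sum_(i | (i != e) && P i) F i.
Proof.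
case Pe: (P e).
  by rewrite (bigD1 e) //= mul1r; congr (_ + _); apply: eq_bigl => i; rewrite andbC.
rewrite mul0r add0r; apply: eq_bigl => i.
by case: eqVneq => [->|]; rewrite ?Pe.
Qed.

Lemma laplacian_delE e (f : V -> R) w :
  laplacian allE f w = laplacian (delE e) f w
    + (ep1 e == w)%:R * (f w - f (ep2 e)) / L e
    + (ep2 e == w)%:R * (f w - f (ep1 e)) / L e.
Proof.
rewrite /laplacian /allE /delE /=.
rewrite (sumr_split_at (fun i => (f w - f (ep2 i)) / L i) (fun i => ep1 i == w) e).
rewrite (sumr_split_at (fun i => (f w - f (ep1 i)) / L i) (fun i => ep2 i == w) e).
by rewrite /=; ring.
Qed.

Section Bridge.
Variable e : E.
Hypothesis cG : connected allE.
Let a := ep1 e.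
Let b := ep2 e.
Let h := volt allE b a.

Lemma bridge_separates : is_bridge ep1 ep2 e -> ~~ connect (adjS (delE e)) a b.
Proof.
move=> br; apply/negP => Cab; move/negP: br; apply.
apply/forallP => u; apply/forallP => w.
apply: (connected_ind (P := connect (adjS (delE e)))) cG _ _ _ _ _.
- by move=> x; exact: connect0.
- by move=> x y z; exact: connect_trans.
move=> x y /existsP[e' /andP[_ xy]]; case: (eqVneq e' e) => [ee|ne].
  move: xy; rewrite ee -/a -/b.
  by case/orP=> /andP[/eqP <- /eqP <-] //; rewrite (sym_connect_sym (@adj_sym _)).
by apply: connect1; apply/existsP; exists e'; rewrite /delE /= ne xy.
Qed.

Lemma voltage_bridge : is_bridge ep1 ep2 e ->
  forall w, h w = if connect (adjS (delE e)) a w then L e else 0.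
Proof.
move=> br; set C := connect _ a; pose psi w := if C w then L e else 0.
have nCb : ~~ C b := bridge_separates br.
have Ca : C a := connect0 _ a.
have ab : a != b by apply: contraNneq nCb => <-.
have C_adj x y : adjS (delE e) x y -> C x = C y.
  move=> xy; apply/idP/idP => Cx; first exact: connect_trans Cx (connect1 xy).
  apply: connect_trans Cx _; rewrite (sym_connect_sym (@adj_sym _)).
  exact: connect1 xy.
have Le := lt0r_neq0 (L_pos e).
have lap_psi w : laplacian allE psi w = (w == a)%:R - (w == b)%:R.
  rewrite (laplacian_delE e) (laplacian_eq0_of_adj (f := psi)); last first.
    by move=> x y /C_adj; rewrite /psi => ->.
  rewrite add0r /psi -/a -/b Ca (negbTE nCb).
  case: (eqVneq w a) => [->|wa]; first by rewrite Ca eq_sym (negbTE ab) /=; field.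
  case: (eqVneq w b) => [->|wb]; first by rewrite (negbTE nCb) /=; field.
  by rewrite !mul0r subrr addr0.
move=> w; rewrite /h (voltage_of_laplacian cG lap_psi).
by rewrite /psi (negbTE nCb) subr0.
Qed.

Lemma voltage_nonbridge : ~~ is_bridge ep1 ep2 e ->
  forall w, h w = L e / (L e + Ri ep1 ep2 L e) * volt (delE e) b a w.
Proof.
move=> /negbNE cG'; rewrite /Ri /res /jhat -/a -/b.
set phi := volt (delE e) b a; set c := L e / (L e + phi a).
have phib : phi b = 0 := voltage_sink b a cG'.
have hL : L e + phi a != 0.
  by apply: lt0r_neq0; apply: ltr_wpDr (voltage_ge0 b a cG' a) (L_pos e).
have Le := lt0r_neq0 (L_pos e).
have lap_cphi w : laplacian allE (fun x => c * phi x) w = (w == a)%:R - (w == b)%:R.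
  rewrite laplacianZ (laplacian_delE e) laplacian_voltage // -/a -/b /c.
  rewrite ![w == _]eq_sym; case aw: (a == w); case bw: (b == w) => /=.
  - have pa : phi a = 0 by rewrite (eqP aw) -(eqP bw) phib.
    by rewrite -(eqP bw) phib pa; field.
  - by rewrite -(eqP aw) phib; field; rewrite Le hL.
  - by rewrite -(eqP bw) phib; field; rewrite Le hL.
  - by rewrite !mul0r subrr !addr0 mulr0.
move=> w; rewrite /h (voltage_of_laplacian cG lap_cphi).
by rewrite phib mulr0 subr0.
Qed.

End Bridge.

Lemma yterms_voltage e p : connected allE ->
  let h := volt allE (ep2 e) (ep1 e) in
  yterm1 ep1 ep2 L e = h (ep1 e) ^+ 2 / L e /\
  yterm2 ep1 ep2 L e p = (h (ep1 e) - 2 * h p) ^+ 2 / L e.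
Proof.
move=> cG h; have Le := lt0r_neq0 (L_pos e).
rewrite /yterm1 /yterm2; case: ifPn => br.
  rewrite /h !(voltage_bridge cG br) connect0.
  by case: (connect _ _ p); split; field.
have cG' : connected (delE e) by apply: negbNE.
rewrite /h !(voltage_nonbridge cG br) /Rai /Rbi /Ri /res /jhat.
rewrite (voltage_swap _ _ p cG').
set phi := volt (delE e) (ep2 e) (ep1 e).
have hL : L e + phi (ep1 e) != 0.
  by apply: lt0r_neq0; apply: ltr_wpDr (voltage_ge0 _ _ cG' _) (L_pos e).
by split; field; rewrite Le hL.
Qed.

End Network.

Section Potentials.
Variables (R : realType) (V E : finType) (ep1 ep2 : E -> V) (L : E -> R).
Hypothesis L_pos : forall e, 0 < L e.
Hypothesis cG : connectedb ep1 ep2 (@allE E).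
Variable p : V.

Local Notation allE := (@allE E).
Local Notation volt := (voltage ep1 ep2 L allE).
Local Notation lapG := (laplacian ep1 ep2 L allE).
Local Notation edge_diff := (edge_diff ep1 ep2).

Definition pot (x : V) : V -> R := volt p x.

Definition rp (x : V) : R := res ep1 ep2 L allE x p.

Lemma rp_pot x : rp x = pot x x.
Proof. by []. Qed.

Lemma pot_sink x : pot x p = 0.
Proof. exact: (voltage_sink L_pos _ _ cG). Qed.

Lemma energy_pot x y :
  \sum_e edge_diff (pot x) e * edge_diff (pot y) e / L e = pot x y.
Proof.
rewrite -(green_identity ep1 ep2 L allE).
under eq_bigr do rewrite (laplacian_voltage L_pos _ _ cG).
by rewrite sum_mul_dipole pot_sink subr0.
Qed.

Lemma pot_sym x y : pot x y = pot y x.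
Proof.
rewrite -energy_pot -energy_pot.
by apply: eq_bigr => e _; rewrite [_ (pot x) e * _]mulrC.
Qed.

Lemma energy_rp x : \sum_e edge_diff rp e * edge_diff (pot x) e / L e = rp x.
Proof.
rewrite -(green_identity ep1 ep2 L allE) /pot.
under eq_bigr do rewrite (laplacian_voltage L_pos _ _ cG).
by rewrite sum_mul_dipole [rp p]rp_pot pot_sink subr0.
Qed.

Lemma voltage_pot a b w : volt b a w = pot a w - pot b w - (pot a b - rp b).
Proof.
have lap_ab u : lapG (fun x => pot a x - pot b x) u = (u == a)%:R - (u == b)%:R.
  by rewrite laplacianB /pot !(laplacian_voltage L_pos _ _ cG); ring.
by rewrite (voltage_of_laplacian L_pos cG lap_ab).
Qed.

Lemma res_pot a b : res ep1 ep2 L allE a b = rp a - 2 * pot a b + rp b.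
Proof. by rewrite /res /jhat voltage_pot [pot b a]pot_sym -rp_pot; ring. Qed.

Lemma sumr_const_card (c : R) : \sum_(x : V) c = #|V|%:R * c.
Proof. by rewrite sumr_const mulr_natl. Qed.

Lemma Kf_pot : Kf ep1 ep2 L = #|V|%:R * \sum_x rp x - \sum_x \sum_y pot x y.
Proof.
have row a : \sum_b res ep1 ep2 L allE a b =
    #|V|%:R * rp a - 2 * \sum_y pot a y + \sum_y rp y.
  rewrite (eq_bigr _ (fun b _ => res_pot a b)).
  by rewrite big_split sumrB /= sumr_const_card -mulr_sumr.
rewrite /Kf (eq_bigr _ (fun a _ => row a)).
by rewrite big_split sumrB /= sumr_const_card -!mulr_sumr; field.
Qed.

Lemma Kf_le_energy_rp :
  Kf ep1 ep2 L <= #|V|%:R ^+ 2 / 4 * \sum_e edge_diff rp e ^+ 2 / L e.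
Proof.
set n : R := #|V|%:R; set Q := \sum_e edge_diff rp e ^+ 2 / L e.
pose H e x := edge_diff (pot x) e - edge_diff rp e / 2.
have cross x y :
    \sum_e H e x * H e y / L e = pot x y - rp x / 2 - rp y / 2 + Q / 4.
  rewrite -energy_pot -(energy_rp x) -(energy_rp y) /Q !mulr_suml.
  rewrite -!sumrB -big_split /=; apply: eq_bigr => e _; rewrite /H.
  move: (edge_diff (pot x) e) (edge_diff (pot y) e) (edge_diff rp e) => A B C.
  by field; exact: lt0r_neq0.
have expand : \sum_e (\sum_x H e x) ^+ 2 / L e =
              \sum_x \sum_y \sum_e H e x * H e y / L e.
  under eq_bigr do rewrite expr2 mulr_suml mulr_suml.
  rewrite exchange_big /=; apply: eq_bigr => x _.
  under eq_bigr do rewrite mulr_sumr mulr_suml.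
  by rewrite exchange_big.
have row x : \sum_y (pot x y - rp x / 2 - rp y / 2 + Q / 4) =
    \sum_y pot x y - n * (rp x / 2) - (\sum_y rp y) / 2 + n * (Q / 4).
  by rewrite big_split sumrB sumrB /= !sumr_const_card -/n -mulr_suml.
have : 0 <= \sum_e (\sum_x H e x) ^+ 2 / L e.
  by apply: sumr_ge0 => e _; apply: divr_ge0; [exact: sqr_ge0 | exact: ltW].
rewrite expand.
under eq_bigr do under eq_bigr do rewrite cross.
rewrite (eq_bigr _ (fun x _ => row x)) big_split sumrB sumrB /= !sumr_const_card.
rewrite -/n -mulr_sumr -mulr_suml Kf_pot -/n => energy_ge0.
have -> : n ^+ 2 / 4 * Q = n * (n * (Q / 4)) by field.
lra.
Qed.

Lemma energy_rp_le_ygraph : \sum_e edge_diff rp e ^+ 2 / L e <= ygraph ep1 ep2 L p.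
Proof.
have edge e : edge_diff rp e ^+ 2 / L e = yterm2 ep1 ep2 L e p /\
              yterm2 ep1 ep2 L e p <= yterm1 ep1 ep2 L e.
  have [-> ->] := yterms_voltage L_pos e p cG.
  set h := volt (ep2 e) (ep1 e).
  have hp_ge0 : 0 <= h p := voltage_ge0 L_pos _ _ cG p.
  have hp_le : h p <= h (ep1 e) := voltage_le_source L_pos _ _ cG p.
  have -> : edge_diff rp e = h (ep1 e) - 2 * h p.
    rewrite /edge_diff /h !voltage_pot !pot_sink [pot (ep2 e) (ep1 e)]pot_sym.
    by rewrite -rp_pot; ring.
  split=> //; rewrite ler_pM2r ?invr_gt0 //; nra.
have : \sum_e yterm2 ep1 ep2 L e p <= \sum_e yterm1 ep1 ep2 L e.
  by apply: ler_sum => e _; exact: (proj2 (edge e)).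
rewrite /ygraph (eq_bigr _ (fun e _ => proj1 (edge e))); lra.
Qed.

End Potentials.

Theorem corollary3p15 (R : realType) (V E : finType) (ep1 ep2 : E -> V)
    (L : E -> R)
    (L_pos : forall e : E, 0 < L e)
    (Gconn : connectedb ep1 ep2 (@allE E))
    (p : V) :
  Kf ep1 ep2 L <= (#|V|%:R ^+ 2 / 4) * ygraph ep1 ep2 L p.
Proof.
apply: le_trans (Kf_le_energy_rp L_pos Gconn p) _.
rewrite ler_wpM2l ?divr_ge0 ?sqr_ge0 //.
exact: energy_rp_le_ygraph.
Qed.
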